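(* Let $n\ge 2$ be an integer. Suppose that for all integers $m,k$ with $2\le m\le n$, $2\le k\le 2^{m-1}+1$ and $k$ even one has $$v_2\big(s(2^n,2^m-k)\big)=2^n-2^m-(n-m)(2^m-k)+m-1-v_2(k).$$ Then for every integer $i$ with $1\le i\le 2^{n-1}$, $$v_2\big(s(2^n,2i-1)\big)=v_2\big(s(2^n,2i)\big)+n-1.$$
   Context: The (unsigned) Stirling numbers of the first kind $s(n,k)$ are defined by $x(x+1)\cdots(x+n-1)=\sum_{k=0}^n s(n,k)x^k$. $v_2$ denotes the $2$-adic valuation. *)

From mathcomp Require Import all_boot all_order all_algebra.
Set Implicit Arguments. Unset Strict Implicit. Unset Printing Implicit Defensive.
Import Order.TTheory GRing.Theory Num.Theory.
Local Open Scope ring_scope.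

(* Unsigned Stirling numbers of the first kind:
   x(x+1)...(x+n-1) = \sum_k s(n,k) x^k. *)
Definition stirling1 (n k : nat) : int :=
  (\prod_(i < n) ('X + (i%:R)%:P) : {poly int})`_k.

(* 2-adic valuation of an integer (v2 0 = 0 by convention; only used on
   nonzero values). *)
Definition v2 (z : int) : nat := logn 2 `|z|%N.

From mathcomp Require Import all_boot all_order all_algebra.
From mathcomp Require Import zify ring.
Set Implicit Arguments. Unset Strict Implicit. Unset Printing Implicit Defensive.
Import Order.TTheory GRing.Theory Num.Theory.
Local Open Scope ring_scope.

(* Let N = 2^n and s_j = s(N, j). The polynomial (x+1)...(x+N-1) changes only by a sign
   under x |-> -x-N, and comparing coefficients after a Taylor expansion at -N gives, for
   even K,
     2 s_(K+1) = (K+1) N s_(K+2) - \sum_(j >= 2) C(K+j, K) (-N)^j s_(K+j+1).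
   The assumed formula for v2 s(N, 2^m - k) shows that v2 s_(2l) decreases by at most
   2n - 2 from one even index to the next. Together with the claim for larger i (downward
   induction), this makes every term of the sum divisible by a higher power of 2 than
   (K+1) N s_(K+2), so v2 s_(K+1) + 1 = v2 s_(K+2) + n. *)

Lemma leq_down_ind (h : nat) (P : nat -> Prop) :
  (forall i, (i <= h)%N -> (forall l, (i < l <= h)%N -> P l) -> P i) ->
  forall i, (i <= h)%N -> P i.
Proof.
move=> step i; have [k] := ubnP (h - i); elim: k i => // k IHk i hik ih.
by apply: step => // l /andP[il lh]; apply: IHk => //; lia.
Qed.

Section ShiftedProducts.
Variable R : comNzRingType.
Implicit Types (p : {poly R}) (c : R).

Lemma coefMXaddC p c j :
  (p * ('X + c%:P))`_j = (if j is j'.+1 then p`_j' else 0) + p`_j * c.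
Proof. by rewrite mulrDr coefD coefMX coefMC; case: j. Qed.

Lemma coefMXsubC p c j :
  (p * ('X - c%:P))`_j = (if j is j'.+1 then p`_j' else 0) - p`_j * c.
Proof. by rewrite -polyCN coefMXaddC mulrN. Qed.

Lemma coef_comp_XaddC p c j :
  (p \Po ('X + c%:P))`_j = \sum_(i < size p) p`_(j + i) *+ 'C(j + i, j) * c ^+ i.
Proof.
have -> : (p \Po ('X + c%:P))`_j = (p^`N(j)).[c].
  elim/poly_ind: p j => [|p d IHp] j; first by rewrite comp_poly0 coef0 linear0 horner0.
  rewrite comp_poly_MXaddC coefD coefMXaddC coefC.
  case: j => [|j]; first by rewrite nderivn0 hornerMXaddC IHp nderivn0 add0r.
  by rewrite nderivnMXaddC hornerD hornerMX !IHp addr0.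
rewrite (@horner_coef_wide _ (size p)); last first.
  by rewrite /nderivn (leq_trans (size_poly _ _)) ?leq_subr.
by apply: eq_bigr => i _; rewrite coef_nderivn.
Qed.

Lemma size_prod_XaddC (F : nat -> R) M : size (\prod_(i < M) ('X + (F i)%:P)) = M.+1.
Proof.
rewrite (eq_bigr (fun i : 'I_M => 'X - (- F i)%:P)) => [|i _]; last by rewrite polyCN opprK.
by rewrite size_prod_XsubC [index_enum _]unlock -enumT size_enum_ord.
Qed.

Lemma coef_prod_XsubC (F : nat -> R) M j :
  (\prod_(i < M) ('X - (F i)%:P))`_j = (-1) ^+ (M + j) * (\prod_(i < M) ('X + (F i)%:P))`_j.
Proof.
elim: M j => [|M IH] j.
  by rewrite !big_ord0 coef1 add0n; case: j => [|j] /=; rewrite ?mulr1 ?mulr0.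
rewrite !big_ord_recr /= coefMXsubC coefMXaddC.
case: j => [|j]; first by rewrite !add0r IH !addn0 exprS; ring.
by rewrite !IH !addnS !addSn !exprS; ring.
Qed.

End ShiftedProducts.

Section ProductsOfPositiveShifts.
Variable R : numDomainType.

Lemma coef_prod_XaddC_ge0 (F : nat -> R) M j : (forall i, 0 <= F i) ->
  0 <= (\prod_(i < M) ('X + (F i)%:P))`_j.
Proof.
move=> F_ge0; elim: M j => [|M IH] j; first by rewrite big_ord0 coef1; case: j.
rewrite big_ord_recr /= coefMXaddC.
by case: j => [|j]; rewrite ?add0r ?addr_ge0 ?mulr_ge0.
Qed.

Lemma coef_prod_XaddC_gt0 (F : nat -> R) M j : (forall i, 0 < F i) -> (j <= M)%N ->
  0 < (\prod_(i < M) ('X + (F i)%:P))`_j.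
Proof.
move=> F_gt0; have F_ge0 i : 0 <= F i by apply: ltW.
elim: M j => [|M IH] [|j] // jM; rewrite ?big_ord0 ?coef1 // big_ord_recr /= coefMXaddC.
  by rewrite add0r mulr_gt0 ?IH.
by rewrite ltr_wpDr ?IH ?mulr_ge0 ?coef_prod_XaddC_ge0.
Qed.

End ProductsOfPositiveShifts.

Definition rising1 (M : nat) : {poly int} := \prod_(i < M) ('X + i.+1%:R%:P).

Lemma stirling1S_rising1 M k : stirling1 M.+1 k.+1 = (rising1 M)`_k.
Proof. by rewrite /stirling1 big_ord_recl /= addr0 coefXM. Qed.

Lemma rising1_reflect M :
  rising1 M \Po ('X - (M.+1)%:R%:P) = \prod_(i < M) ('X - i.+1%:R%:P).
Proof.
rewrite /rising1 (big_morph (fun p => p \Po ('X - (M.+1)%:R%:P))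
  (fun p q => comp_polyM p q _) (comp_polyC 1 _)).
rewrite (reindex_inj rev_ord_inj); apply: eq_bigr => i _ /=.
rewrite comp_polyD comp_polyX comp_polyC -addrA -polyCN -polyCD -polyCN.
congr (_ + polyC _).
have := ltn_ord i; rewrite !natz; lia.
Qed.

(* Taylor expansion of [rising1 M] at [-(M+1)], where it becomes [rising1 M] with the
   sign of the constant terms reversed. *)
Lemma stirling1_reflect M K :
  \sum_(i < M.+1) stirling1 M.+1 (K + i).+1 *+ 'C(K + i, K) * (- (M.+1)%:R) ^+ i
  = (-1) ^+ (M + K) * stirling1 M.+1 K.+1.
Proof.
have := coef_comp_XaddC (rising1 M) (- (M.+1)%:R) K.
rewrite (size_prod_XaddC (fun i => i.+1%:R)) polyCN rising1_reflect.
rewrite (coef_prod_XsubC (fun i => i.+1%:R)) stirling1S_rising1 => ->.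
by apply: eq_bigr => i _; rewrite stirling1S_rising1.
Qed.

Lemma stirling1_gt0 N k : (0 < k <= N)%N -> 0 < stirling1 N k.
Proof.
case: N k => [|M] [|k] //= hk; rewrite stirling1S_rising1.
by apply: (@coef_prod_XaddC_gt0 _ (fun i => i.+1%:R)) => // i; apply: ltr0Sn.
Qed.

Lemma stirling1_eq0 N k : (N < k)%N -> stirling1 N k = 0.
Proof. by move=> Nk; rewrite /stirling1 nth_default // (size_prod_XaddC (fun i => i%:R)). Qed.

Lemma stirling1nn N : stirling1 N N = 1.
Proof.
have /monicP := monic_prod (index_enum 'I_N) (P := xpredT) (fun i _ => monicXaddC (i%:R : int)).
by rewrite lead_coefE (size_prod_XaddC (fun i => i%:R)).
Qed.

Lemma stirling1_reflect_even M K : ~~ odd M -> ~~ odd K ->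
  stirling1 M.+2 K.+1 * 2 = stirling1 M.+2 K.+2 *+ K.+1 * (M.+2)%:R
    - \sum_(j < M) stirling1 M.+2 (K + j.+2).+1 *+ 'C(K + j.+2, K) * (- (M.+2)%:R) ^+ j.+2.
Proof.
move=> M_even K_even; have := stirling1_reflect M.+1 K.
rewrite 2!big_ord_recl /= addn0 binn expr0 mulr1 mulr1n addn1 binSn expr1.
rewrite -signr_odd /= oddD (negbTE M_even) (negbTE K_even) /= expr1 mulN1r.
rewrite /bump /= mulrN; set T := \sum_(_ < _) _; set A := _ *+ K.+1 * _ => e.
by rewrite -/T -/A; clearbody T A; lia.
Qed.

Lemma dvdz_exp2_v2 z : ((2 ^ v2 z)%:Z %| z)%Z.
Proof. by rewrite dvdzE /v2 absz_nat pfactor_dvdnn. Qed.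

Lemma dvdz_exp2E z e : z != 0 -> ((2 ^ e)%:Z %| z)%Z = (e <= v2 z)%N.
Proof. by move=> z_neq0; rewrite dvdzE absz_nat pfactor_dvdn // absz_gt0. Qed.

Lemma dvdz_exp2l e f z : (e <= f)%N -> ((2 ^ f)%:Z %| z)%Z -> ((2 ^ e)%:Z %| z)%Z.
Proof. by move=> ef; apply: dvdz_trans; rewrite dvdzE !absz_nat dvdn_exp2l. Qed.

Lemma v2M a b : a != 0 -> b != 0 -> v2 (a * b) = (v2 a + v2 b)%N.
Proof. by move=> a_neq0 b_neq0; rewrite /v2 abszM lognM // absz_gt0. Qed.

Lemma v2_exp2 e : v2 (2 ^ e)%:Z = e.
Proof. by rewrite /v2 absz_nat pfactorK. Qed.

Lemma v2_odd m : odd m -> v2 m%:Z = 0%N.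
Proof. by move=> m_odd; rewrite /v2 absz_nat logn_coprime // coprime_sym coprimen2 m_odd. Qed.

Lemma v2_ltn x m : (0 < x < 2 ^ m)%N -> (v2 x%:Z < m)%N.
Proof.
case/andP=> x_gt0 x_lt; rewrite /v2 absz_nat -(@ltn_exp2l 2) //.
exact: leq_ltn_trans (dvdn_leq x_gt0 (pfactor_dvdnn 2 x)) x_lt.
Qed.

Lemma v2_addr_dvd a b : a != 0 -> ((2 ^ (v2 a).+1)%:Z %| b)%Z -> v2 (a + b) = v2 a.
Proof.
move=> a_neq0 dvd_b.
have a_ndvd : ~~ ((2 ^ (v2 a).+1)%:Z %| a)%Z by rewrite dvdz_exp2E // ltnn.
have ab_neq0 : a + b != 0.
  apply: contraNneq a_ndvd => ab0.
  by rewrite -[X in (_ %| X)%Z](addrK b) ab0 sub0r rpredN.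
apply/eqP; rewrite eqn_leq; apply/andP; split.
  rewrite leqNgt; apply: contra a_ndvd; rewrite -dvdz_exp2E // => dvd_ab.
  by rewrite -[X in (_ %| X)%Z](addrK b) rpredB ?(dvdz_exp2l _ dvd_ab).
by rewrite -dvdz_exp2E // rpredD ?dvdz_exp2_v2 ?(dvdz_exp2l (leqnSn _) dvd_b).
Qed.

Definition stirling1_v2_formula (n : nat) : Prop :=
  forall m k : nat, (2 <= m)%N -> (m <= n)%N -> (2 <= k)%N ->
    (k <= 2 ^ m.-1 + 1)%N -> ~~ odd k ->
    (v2 (stirling1 (2 ^ n) (2 ^ m - k)))%:Z =
      (2 ^ n)%:Z - (2 ^ m)%:Z - (n - m)%:Z * ((2 ^ m)%:Z - k%:Z)
      + m%:Z - 1 - (v2 k%:Z)%:Z.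

Section PowerOfTwoRow.
Variable n : nat.
Hypothesis n_ge2 : (2 <= n)%N.
Hypothesis v2_formula : stirling1_v2_formula n.
Local Notation vs j := (v2 (stirling1 (2 ^ n) j)).

Lemma v2_stirling1_step_in_block m k :
  (2 <= m <= n)%N -> (2 <= k)%N -> (k.+2 <= 2 ^ m.-1 + 1)%N -> ~~ odd k ->
  (vs (2 ^ m - k.+2) <= vs (2 ^ m - k) + 2 * n - 2)%N.
Proof.
case/andP=> m_ge2 m_le_n k_ge2 k_le k_even.
have k2_even : ~~ odd k.+2 by rewrite /= negbK.
have := v2_formula m_ge2 m_le_n (leqW (leqW k_ge2)) k_le k2_even.
have := v2_formula m_ge2 m_le_n k_ge2 (leqW (leqW k_le)) k_even.
have : (v2 k%:Z < m)%N.
  have exp2m : (2 ^ m = 2 * 2 ^ m.-1)%N by rewrite -expnS prednK // ltnW.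
  by apply: v2_ltn; lia.
lia.
Qed.

Lemma v2_stirling1_step_block_end m :
  (2 <= m <= n)%N -> (vs (2 ^ m - 2) <= vs (2 ^ m) + 2 * n - 2)%N.
Proof.
case/andP=> m_ge2 m_le_n.
have two_le : (2 <= 2 ^ m.-1 + 1)%N by rewrite addn1 ltnS expn_gt0.
have := v2_formula m_ge2 m_le_n (leqnn 2) two_le isT.
rewrite (_ : v2 2 = 1%N) //.
have [<-|m_lt_n] := eqVneq m n.
  by rewrite stirling1nn (_ : v2 1 = 0%N) // subnn mul0r; lia.
have m1_le_n : (m.+1 <= n)%N by rewrite ltn_neqAle m_lt_n.
have exp2m_even : ~~ odd (2 ^ m) by rewrite oddX negb_or /= -lt0n ltnW.
have exp2m_ge2 : (2 <= 2 ^ m)%N by rewrite (leq_trans m_ge2) // ltnW // ltn_expl.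
have := v2_formula (leqW m_ge2) m1_le_n exp2m_ge2 (leq_addr _ _) exp2m_even.
by rewrite v2_exp2 expnS (_ : (2 * 2 ^ m - 2 ^ m = 2 ^ m)%N); nia.
Qed.

Lemma v2_stirling1_even_step l : (0 < l)%N -> (2 * l.+1 <= 2 ^ n)%N ->
  (vs (2 * l) <= vs (2 * l.+1) + 2 * n - 2)%N.
Proof.
move=> l_gt0 l_le.
have [t /andP[lo hi]] : exists t, (2 ^ t <= 2 * l < 2 ^ t.+1)%N.
  by exists (trunc_log 2 (2 * l)); rewrite trunc_logP ?trunc_log_ltn // muln_gt0.
rewrite expnS in hi.
have t_gt0 : (0 < t)%N by rewrite -(@ltn_exp2l 2) //; lia.
have t_lt_n : (t < n)%N by rewrite -(@ltn_exp2l 2) //; lia.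
have bnd : (2 <= t.+1 <= n)%N by rewrite ltnS t_gt0.
have [k2|k_ne2] := eqVneq (2 * 2 ^ t - 2 * l)%N 2%N.
  have := v2_stirling1_step_block_end bnd; rewrite expnS.
  have e1 : (2 * 2 ^ t - 2 = 2 * l)%N by lia.
  have e2 : (2 * 2 ^ t = 2 * l.+1)%N by lia.
  by rewrite e1 e2.
set k := (2 * 2 ^ t - 2 * l - 2)%N.
have k_ge2 : (2 <= k)%N by lia.
have k_le : (k.+2 <= 2 ^ t + 1)%N by lia.
have k_double : k = (2 * (2 ^ t - l - 1))%N by lia.
have k_even : ~~ odd k by rewrite k_double oddM.
have := v2_stirling1_step_in_block bnd k_ge2 k_le k_even; rewrite expnS.
have e1 : (2 * 2 ^ t - k.+2 = 2 * l)%N by lia.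
have e2 : (2 * 2 ^ t - k = 2 * l.+1)%N by lia.
by rewrite e1 e2.
Qed.

Lemma v2_stirling1_even_chain i d : (0 < i)%N -> (2 * (i + d) <= 2 ^ n)%N ->
  (vs (2 * i) <= vs (2 * (i + d)) + (2 * n - 2) * d)%N.
Proof.
move=> i_gt0; elim: d => [|d IHd] le; first by rewrite addn0 muln0 addn0.
have := @v2_stirling1_even_step (i + d) (ltn_addr _ i_gt0); rewrite -addnS.
by move/(_ le); move: IHd; rewrite addnS; lia.
Qed.

(* The term of index j+2 in [stirling1_reflect_even] beats the term of index 1. *)
Lemma v2_stirling1_tail i j : (0 < i)%N -> (2 * i + j.+1 <= 2 ^ n)%N ->
  (forall l, (i < l <= 2 ^ n.-1)%N -> vs (2 * l).-1 = (vs (2 * l) + n.-1)%N) ->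
  (vs (2 * i) + n < vs (2 * i + j.+1) + n * j.+2)%N.
Proof.
move=> i_gt0 le odd_even.
have exp2n : (2 ^ n = 2 * 2 ^ n.-1)%N by rewrite -expnS prednK // ltnW.
have := odd_double_half j; rewrite -muln2; set d := j./2 => j_eq.
have := @v2_stirling1_even_chain i d.+1 i_gt0.
case: (odd j) j_eq => /= j_eq.
  by rewrite (_ : (2 * i + j.+1 = 2 * (i + d.+1))%N); nia.
have := odd_even (i + d.+1)%N.
by rewrite (_ : (2 * i + j.+1 = (2 * (i + d.+1)).-1)%N); nia.
Qed.

Lemma v2_stirling1_odd_even i : (0 < i <= 2 ^ n.-1)%N ->
  (forall l, (i < l <= 2 ^ n.-1)%N -> vs (2 * l).-1 = (vs (2 * l) + n.-1)%N) ->
  vs (2 * i).-1 = (vs (2 * i) + n.-1)%N.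
Proof.
case/andP=> i_gt0 i_le odd_even.
have exp2n : (2 ^ n = 2 * 2 ^ n.-1)%N by rewrite -expnS prednK // ltnW.
have [M eM] : exists M, (2 ^ n = M.+2)%N by exists (2 ^ n).-2; lia.
have [K [eK1 eK2]] : exists K, (2 * i).-1 = K.+1 /\ (2 * i = K.+2)%N by exists (2 * i).-2; lia.
have M_even : ~~ odd M by rewrite -[odd M]negbK -oddS -oddS -eM oddX orbF -lt0n ltnW.
have K_even : ~~ odd K by rewrite -[odd K]negbK -oddS -oddS -eK2 oddM.
have := stirling1_reflect_even M_even K_even; rewrite -eM eK1 eK2.
set A := stirling1 _ K.+2 *+ K.+1 * _; set T := \sum_(j < M) _ => e.
have s_neq0 k : (0 < k <= 2 ^ n)%N -> stirling1 (2 ^ n) k != 0.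
  by move=> k_bnd; rewrite gt_eqF // stirling1_gt0.
have s2_neq0 : stirling1 (2 ^ n) K.+2 != 0 by apply: s_neq0; lia.
have K1_neq0 : (K.+1)%:R != 0 :> int by rewrite pnatr_eq0.
have exp2n_neq0 : (2 ^ n)%:R != 0 :> int by rewrite pnatr_eq0 expn_eq0.
have A_neq0 : A != 0 by rewrite /A -[stirling1 _ _ *+ _]mulr_natr !mulf_neq0.
have vA : v2 A = (vs K.+2 + n)%N.
  rewrite /A -[stirling1 _ _ *+ _]mulr_natr (v2M (mulf_neq0 s2_neq0 K1_neq0) exp2n_neq0) v2M //.
  by rewrite !natz v2_exp2 v2_odd ?addn0 //= K_even.
have dvdT : ((2 ^ (v2 A).+1)%:Z %| - T)%Z.
  rewrite rpredN; apply: rpred_sum => j _.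
  have [big|small] := ltnP (2 ^ n) (K + j.+2).+1.
    by rewrite stirling1_eq0 // mul0rn mul0r rpred0.
  have idx : ((K + j.+2).+1 = 2 * i + j.+1)%N by lia.
  have tail := @v2_stirling1_tail i j i_gt0 ltac:(lia) odd_even.
  apply: (@dvdz_exp2l _ (vs (2 * i + j.+1) + n * j.+2)); first by rewrite vA -eK2; lia.
  rewrite expnD PoszM idx; apply: dvdz_mul; first by rewrite rpredMn ?dvdz_exp2_v2.
  by rewrite exprNn -natrX -expnM natz dvdz_mull.
have s1_neq0 : stirling1 (2 ^ n) K.+1 != 0 by apply: s_neq0; lia.
have := v2_addr_dvd A_neq0 dvdT; rewrite -e v2M // vA (_ : v2 2 = 1%N) //; lia.
Qed.

End PowerOfTwoRow.

Theorem lemma2p5 (n : nat) (hn : (2 <= n)%N) :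
  (forall m k : nat, (2 <= m)%N -> (m <= n)%N -> (2 <= k)%N ->
     (k <= 2 ^ m.-1 + 1)%N -> ~~ odd k ->
     (v2 (stirling1 (2 ^ n) (2 ^ m - k)))%:Z =
       (2 ^ n)%:Z - (2 ^ m)%:Z - (n - m)%:Z * ((2 ^ m)%:Z - k%:Z)
       + m%:Z - 1 - (v2 k%:Z)%:Z) ->
  forall i : nat, (1 <= i)%N -> (i <= 2 ^ n.-1)%N ->
    v2 (stirling1 (2 ^ n) (2 * i).-1) = (v2 (stirling1 (2 ^ n) (2 * i)) + n.-1)%N.
Proof.
move=> formula i i_gt0 i_le; move: i i_le i_gt0.
apply: leq_down_ind => i i_le odd_even i_gt0.
apply: (v2_stirling1_odd_even hn formula); first by rewrite i_gt0.
move=> l /andP[il l_le]; apply: odd_even; rewrite ?il //.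
exact: leq_ltn_trans il.
Qed.
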